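(* Let $\alpha\ge1$, integers $k_1,k_2\ge0$, $n\ge1$, $k=k_1+k_2$. For every integer $i$ with $1\le i\le n$, $$\frac{k!}{k_1!\,k_2!}\,(k_1+n+1-i)^{\alpha(k_1+n+1-i)}\,(k_2+i)^{\alpha(k_2+i)}\ \le\ 4^{-(\alpha-1)\min(k_1+1,\,k_2+1)}\,(k+n+1)^{\alpha(k+n+1)}.$$
   Context: Convention $0^0=1$. *)

From Stdlib Require Import Reals Lra Lia Arith Factorial.
Open Scope R_scope.

From Stdlib Require Import Reals Arith Factorial Lra Lia.
Open Scope R_scope.

(* Write k := k1 + k2, a := k1 + n + 1 - i and b := k2 + i, so that
   a + b = k + n + 1, and
   m := min (k1 + 1) (k2 + 1), which is at most both a and b.  After the
   rewriting x^(alpha x) = (x^x)^alpha, the claim reads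
       C(k, k1) * (a^a b^b)^alpha <= (4^m)^(-(alpha - 1)) * ((a+b)^(a+b))^alpha.
   It follows by interpolating (lemma [interpolation_bound]) between the two
   "alpha = 1" estimates
     (1) C(k, k1) * a^a b^b <= (a+b)^(a+b), because C(k, k1) <= C(a+b, a)
         (binomial coefficients grow when both arguments are shifted up,
         [binomial_le_shift]) and C(a+b, a) a^a b^b is one term of the binomial
         expansion of (a+b)^(a+b) ([binomial_term_le_pow]);
     (2) 4^m * a^a b^b <= (a+b)^(a+b) for m <= a, b, because 4ab <= (a+b)^2
         ([four_pow_le_pow]). *)

(* [C n k] is a quotient of factorials, hence positive (even for k > n,
   where subtraction truncates). *)
Lemma binomial_pos (n k : nat) : 0 < C n k.
Proof.
  unfold C. apply Rdiv_lt_0_compat.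
  - apply lt_0_INR, lt_O_fact.
  - apply Rmult_lt_0_compat; apply lt_0_INR, lt_O_fact.
Qed.

(* Increasing the top argument does not decrease [C n k]: Pascal's rule. *)
Lemma binomial_le_succ_top (n k : nat) : (k <= n)%nat -> C n k <= C (S n) k.
Proof.
  intros Hk. destruct k as [|k].
  - unfold C. rewrite !Nat.sub_0_r. right. field.
    repeat split; apply not_0_INR, fact_neq_0.
  - rewrite <- pascal by lia. pose proof (binomial_pos n k). lra.
Qed.

(* Increasing both arguments does not decrease [C n k]: Pascal's rule again,
   the diagonal case being C n n = 1 = C (S n) (S n). *)
Lemma binomial_le_succ_both (n k : nat) : (k <= n)%nat -> C n k <= C (S n) (S k).
Proof.
  intros Hk. destruct (Nat.eq_dec k n) as [->|Hne].
  - unfold C. rewrite !Nat.sub_diag. right. field.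
    repeat split; apply not_0_INR, fact_neq_0.
  - rewrite <- pascal by lia. pose proof (binomial_pos n (S k)). lra.
Qed.

Lemma binomial_le_shift (n k d e : nat) :
  (k <= n)%nat -> C n k <= C (n + d + e) (k + d).
Proof.
  intros Hk. induction d as [|d IHd].
  - rewrite !Nat.add_0_r. induction e as [|e IHe].
    + rewrite Nat.add_0_r. lra.
    + replace (n + S e)%nat with (S (n + e)) by lia.
      eapply Rle_trans; [exact IHe|]. apply binomial_le_succ_top. lia.
  - replace (n + S d + e)%nat with (S (n + d + e)) by lia.
    replace (k + S d)%nat with (S (k + d)) by lia.
    eapply Rle_trans; [exact IHd|]. apply binomial_le_succ_both. lia.
Qed.

Lemma sum_f_R0_ge_term (f : nat -> R) (N t : nat) :
  (t <= N)%nat -> (forall j, 0 <= f j) -> f t <= sum_f_R0 f N.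
Proof.
  intros Ht Hf. induction N as [|N IH].
  - replace t with 0%nat by lia. simpl. lra.
  - simpl. destruct (Nat.eq_dec t (S N)) as [->|Hne].
    + assert (0 <= sum_f_R0 f N) by (apply cond_pos_sum; auto). lra.
    + specialize (IH ltac:(lia)). specialize (Hf (S N)). lra.
Qed.

Lemma binomial_term_le_pow (x y : R) (p r : nat) :
  0 <= x -> 0 <= y -> C (p + r) p * x ^ p * y ^ r <= (x + y) ^ (p + r).
Proof.
  intros Hx Hy. rewrite binomial.
  replace (y ^ r) with (y ^ (p + r - p)) by (f_equal; lia).
  apply (sum_f_R0_ge_term (fun j => C (p + r) j * x ^ j * y ^ (p + r - j))).
  - lia.
  - intros j. pose proof (binomial_pos (p + r) j).
    apply Rmult_le_pos; [apply Rmult_le_pos|]; try lra; apply pow_le; lra.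
Qed.

(* Estimate (2): 4^m x^p y^r <= (x + y)^(p + r) whenever m <= p and m <= r;
   each of the m factors 4xy is at most (x + y)^2, the rest is trivial. *)
Lemma four_pow_le_pow (x y : R) (p r m : nat) :
  0 <= x -> 0 <= y -> (m <= p)%nat -> (m <= r)%nat ->
  4 ^ m * (x ^ p * y ^ r) <= (x + y) ^ (p + r).
Proof.
  intros Hx Hy Hp Hr.
  assert (Hpair : 4 * (x * y) <= (x + y) ^ 2)
    by (pose proof (pow2_ge_0 (x - y)); nra).
  assert (Hsq : 4 ^ m * (x ^ m * y ^ m) <= ((x + y) ^ 2) ^ m).
  { rewrite <- !Rpow_mult_distr. apply pow_incr.
    split; [|exact Hpair]. apply Rmult_le_pos; [lra|]. apply Rmult_le_pos; lra. }
  assert (Hxr : x ^ (p - m) <= (x + y) ^ (p - m)) by (apply pow_incr; lra).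
  assert (Hyr : y ^ (r - m) <= (x + y) ^ (r - m)) by (apply pow_incr; lra).
  replace (x ^ p) with (x ^ m * x ^ (p - m)) by (rewrite <- pow_add; f_equal; lia).
  replace (y ^ r) with (y ^ m * y ^ (r - m)) by (rewrite <- pow_add; f_equal; lia).
  replace ((x + y) ^ (p + r))
    with (((x + y) ^ 2) ^ m * (x + y) ^ (p - m) * (x + y) ^ (r - m))
    by (rewrite <- pow_mult, <- !pow_add; f_equal; lia).
  replace (4 ^ m * (x ^ m * x ^ (p - m) * (y ^ m * y ^ (r - m))))
    with (4 ^ m * (x ^ m * y ^ m) * x ^ (p - m) * y ^ (r - m)) by ring.
  assert (0 <= x ^ m /\ 0 <= y ^ m /\ 0 <= x ^ (p - m) /\ 0 <= y ^ (r - m))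
    as (? & ? & ? & ?) by (repeat split; apply pow_le; lra).
  assert (H4xy : 0 <= 4 ^ m * (x ^ m * y ^ m))
    by (apply Rmult_le_pos; [apply pow_le; lra | apply Rmult_le_pos; auto]).
  apply Rmult_le_compat; [apply Rmult_le_pos; auto | auto | | exact Hyr].
  apply Rmult_le_compat; auto.
Qed.

Lemma Rpower_peel (x t : R) : 0 < x -> Rpower x t = x * Rpower x (t - 1).
Proof.
  intros Hx. replace t with (1 + (t - 1)) at 1 by ring.
  rewrite Rpower_plus, Rpower_1 by exact Hx. reflexivity.
Qed.

Lemma Rpower_inv_base (q t : R) : 0 < q -> Rpower (/ q) t = Rpower q (- t).
Proof.
  intros Hq. unfold Rpower. rewrite ln_Rinv by exact Hq. f_equal. ring.
Qed.

(* Interpolation: if both c P <= M and q P <= M, then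
   c P^alpha = (c P) P^(alpha-1) <= M (M/q)^(alpha-1) = q^(-(alpha-1)) M^alpha. *)
Lemma interpolation_bound (c P M q alpha : R) :
  0 <= c -> 0 < P -> 0 < q -> 1 <= alpha -> c * P <= M -> q * P <= M ->
  c * Rpower P alpha <= Rpower q (- (alpha - 1)) * Rpower M alpha.
Proof.
  intros Hc HP Hq Halpha HcP HqP.
  assert (HM : 0 < M) by nra.
  assert (Hratio : Rpower P (alpha - 1) <= Rpower (/ q * M) (alpha - 1)).
  { apply Rle_Rpower_l; [lra|split; [exact HP|]].
    apply (Rmult_le_reg_l q); [exact Hq|]. field_simplify; lra. }
  rewrite <- Rpower_mult_distr, Rpower_inv_base in Hratio
    by (try apply Rinv_0_lt_compat; assumption).
  assert (0 <= Rpower P (alpha - 1)) by (unfold Rpower; left; apply exp_pos).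
  rewrite (Rpower_peel P), (Rpower_peel M) by assumption.
  replace (Rpower q (- (alpha - 1)) * (M * Rpower M (alpha - 1)))
    with (M * (Rpower q (- (alpha - 1)) * Rpower M (alpha - 1))) by ring.
  rewrite <- Rmult_assoc.
  apply Rmult_le_compat; [apply Rmult_le_pos; lra | assumption | exact HcP | exact Hratio].
Qed.

Lemma Rpower_nat_mult (x t : R) (m : nat) :
  0 < x -> Rpower x (INR m * t) = Rpower (x ^ m) t.
Proof. intros Hx. rewrite <- Rpower_mult, Rpower_pow by exact Hx. reflexivity. Qed.

Lemma factorial_ratio_binomial (k1 k2 : nat) :
  INR (fact (k1 + k2)) / (INR (fact k1) * INR (fact k2)) = C (k1 + k2) k1.
Proof. unfold C. replace (k1 + k2 - k1)%nat with k2 by lia. reflexivity. Qed.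

Theorem corollaryA2 (alpha : R) (k1 k2 n i : nat) :
  1 <= alpha -> (1 <= n)%nat -> (1 <= i)%nat -> (i <= n)%nat ->
  INR (fact (k1 + k2)) / (INR (fact k1) * INR (fact k2))
    * Rpower (INR (k1 + n + 1 - i)) (alpha * INR (k1 + n + 1 - i))
    * Rpower (INR (k2 + i)) (alpha * INR (k2 + i))
  <= Rpower 4 (- ((alpha - 1) * INR (Nat.min (k1 + 1) (k2 + 1))))
     * Rpower (INR (k1 + k2 + n + 1)) (alpha * INR (k1 + k2 + n + 1)).
Proof.
  intros Halpha Hn Hi Hin.
  set (a := (k1 + n + 1 - i)%nat). set (b := (k2 + i)%nat).
  set (m := Nat.min (k1 + 1) (k2 + 1)).
  replace (k1 + k2 + n + 1)%nat with (a + b)%nat by (unfold a, b; lia).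
  assert (Ha : 0 < INR a) by (apply lt_0_INR; unfold a; lia).
  assert (Hb : 0 < INR b) by (apply lt_0_INR; unfold b; lia).
  assert (Hab : 0 < INR (a + b)) by (apply lt_0_INR; unfold a, b; lia).
  rewrite factorial_ratio_binomial, !(Rmult_comm alpha (INR _)), !Rpower_nat_mult
    by assumption.
  replace (- ((alpha - 1) * INR m)) with (INR m * - (alpha - 1)) by ring.
  rewrite Rpower_nat_mult, Rmult_assoc, Rpower_mult_distr by (try apply pow_lt; lra).
  rewrite plus_INR.
  apply interpolation_bound.
  - left. apply binomial_pos.
  - apply Rmult_lt_0_compat; apply pow_lt; assumption.
  - apply pow_lt; lra.
  - exact Halpha.
  -
    assert (Hshift : C (k1 + k2) k1 <= C (a + b) a).
    { replace (a + b)%nat with (k1 + k2 + (n + 1 - i) + i)%nat by (unfold a, b; lia).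
      replace a with (k1 + (n + 1 - i))%nat by (unfold a; lia).
      apply binomial_le_shift. lia. }
    eapply Rle_trans; [|apply binomial_term_le_pow; lra].
    rewrite <- Rmult_assoc. apply Rmult_le_compat_r; [apply pow_le; lra|].
    apply Rmult_le_compat_r; [apply pow_le; lra | exact Hshift].
  -
    apply four_pow_le_pow; try lra; unfold m, a, b; lia.
Qed.
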